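(* Let $(Y,\nu,S)$ be a mixing Gibbs system with $Y\subseteq A^{\mathbb{Z}}$, and let $\mathcal{P}$ be the time-zero partition of $Y$ (by the value of the coordinate $y_0$). Then for every integer $p\ge0$, \[\sup_{N\ge1}\mathrm{I}_\nu\big(\mathcal{P}^{[-p;N+p)};\mathcal{P}^{[-N-p;p)}\big)<\infty.\]
   Context: A mixing Gibbs system: $A$ finite, $Y\subseteq A^{\mathbb{Z}}$ a topologically mixing subshift of finite type, $S$ the left shift, and $\nu$ the Gibbs measure associated to a Hölder continuous potential on $Y$ (Hölder w.r.t. $d(a,a')=\sum_n2^{-|n|}1_{\{a_n\ne a'_n\}}$). For $F\subseteq\mathbb{Z}$ finite, $\mathcal{P}^F=\bigvee_{n\in F}S^{-n}\mathcal{P}$; $[a;b)=\{a,\dots,b-1\}$. $\mathrm{I}_\nu$ denotes mutual information of partitions. *)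

From Stdlib Require Import Reals Lra Lia ZArith Arith List.
Import ListNotations.
Open Scope R_scope.

(* The finite alphabet A is {0,...,k-1} (symbols are nats < k).
   A configuration is a map Z -> nat. *)
Definition config := Z -> nat.

Definition shiftn (j : nat) (y : config) : config := fun n => y (n + Z.of_nat j)%Z.

Definition matches (y : config) (a : Z) (w : list nat) : Prop :=
  forall j : nat, (j < length w)%nat -> y (a + Z.of_nat j)%Z = nth j w 0%nat.

Definition SFT (k : nat) (forb : list (list nat)) (y : config) : Prop :=
  (forall n, (y n < k)%nat) /\
  forall (n : Z) (w : list nat), In w forb -> ~ matches y n w.

(* topological mixing, tested on the basis of cylinder sets *)
Definition top_mixing (Y : config -> Prop) : Prop :=
  forall u v : list nat,
    (exists y, Y y /\ matches y 0 u) ->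
    (exists y, Y y /\ matches y 0 v) ->
    exists M : nat, forall n : nat, (M <= n)%nat ->
      exists y, Y y /\ matches y 0 u /\ matches y (Z.of_nat n) v.

Definition lsum {T} (f : T -> R) (l : list T) : R := fold_right Rplus 0 (map f l).

Fixpoint words (n k : nat) : list (list nat) :=
  match n with
  | O => [[]]
  | S n' => flat_map (fun a => map (cons a) (words n' k)) (seq 0 k)
  end.

Definition dpart (y y' : config) (N : nat) : R :=
  lsum (fun i : nat =>
          let n := (Z.of_nat i - Z.of_nat N)%Z in
          (/ 2) ^ (Z.abs_nat n) * (if Nat.eqb (y n) (y' n) then 0 else 1))
       (seq 0 (2 * N + 1)).

(* phi is Hoelder continuous on Y w.r.t. d  (d y y' = lim_N dpart y y' N) *)
Definition Holder_on (Y : config -> Prop) (phi : config -> R) : Prop :=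
  exists C alpha : R, 0 < alpha /\
    forall (y y' : config) (l : R), Y y -> Y y' -> Un_cv (dpart y y') l ->
      Rabs (phi y - phi y') <= C * Rpower l alpha.

(* By Kolmogorov extension, a shift-invariant Borel probability measure nu on
   A^Z is the same thing as its cylinder function
      mu w = nu { y : y_{a+j} = w_j, j < |w| }   (independent of a),
   subject to normalisation and consistency. *)
Record inv_prob (k : nat) (mu : list nat -> R) : Prop := {
  ip_nonneg : forall w, 0 <= mu w;
  ip_one    : mu [] = 1;
  ip_right  : forall w, mu w = lsum (fun a => mu (w ++ [a])) (seq 0 k);
  ip_left   : forall w, mu w = lsum (fun a => mu (a :: w)) (seq 0 k)
}.

Definition supported_on (Y : config -> Prop) (mu : list nat -> R) : Prop :=
  forall w, ~ (exists y, Y y /\ matches y 0 w) -> mu w = 0.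

Definition init_word (y : config) (n : nat) : list nat :=
  map (fun j => y (Z.of_nat j)) (seq 0 n).

Definition birkhoff (phi : config -> R) (n : nat) (y : config) : R :=
  lsum (fun j => phi (shiftn j y)) (seq 0 n).

Definition Gibbs_for (Y : config -> Prop) (phi : config -> R) (mu : list nat -> R) : Prop :=
  exists P K : R, 0 < K /\
    forall (y : config) (n : nat), Y y -> (1 <= n)%nat ->
      / K * exp (- INR n * P + birkhoff phi n y) <= mu (init_word y n) /\
      mu (init_word y n) <= K * exp (- INR n * P + birkhoff phi n y).

Definition Gibbs_measure (k : nat) (Y : config -> Prop) (mu : list nat -> R) : Prop :=
  inv_prob k mu /\ supported_on Y mu /\
  exists phi, Holder_on Y phi /\ Gibbs_for Y phi mu.

(* Atoms of P^[a;a+m) are the cylinders {y : y_{a+j} = u_j, j<m}, u a word of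
   length m over {0..k-1}.  The measure of the intersection of the atom u of
   P^[a;a+m) and the atom v of P^[c;c+m') is the sum of the measures of the
   atoms of P^[lo;hi) (lo,hi the hull of both intervals) contained in it. *)
Definition word_atb (w : list nat) (off : nat) (u : list nat) : bool :=
  forallb (fun j => Nat.eqb (nth (off + j) w 0%nat) (nth j u 0%nat)) (seq 0 (length u)).

Definition joint (k : nat) (mu : list nat -> R) (a : Z) (u : list nat) (c : Z) (v : list nat) : R :=
  let lo := Z.min a c in
  let hi := Z.max (a + Z.of_nat (length u)) (c + Z.of_nat (length v)) in
  lsum (fun w => if andb (word_atb w (Z.to_nat (a - lo)) u) (word_atb w (Z.to_nat (c - lo)) v)
                 then mu w else 0)
       (words (Z.to_nat (hi - lo)) k).

Definition mi_term (x a b : R) : R :=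
  if Req_EM_T x 0 then 0 else x * ln (x / (a * b)).

Definition mutual_info (k : nat) (mu : list nat -> R) (a : Z) (m : nat) (c : Z) (m' : nat) : R :=
  lsum (fun u => lsum (fun v => mi_term (joint k mu a u c v) (mu u) (mu v)) (words m' k))
       (words m k).

(* The windows [-p; N+p) and [-N-p; p) overlap in [-p; p), so a joint atom of
   positive measure is a single cylinder [abc] with |a| = |c| = N and |b| = 2p,
   lying in the atoms [ab] and [bc].  The Gibbs property makes the measure
   quasi-Bernoulli: nu(abc) nu(b) <= C nu(ab) nu(bc) and
   nu(abc) <= C nu(a) nu(b) nu(c).  Hence each term of the mutual information is at
   most nu(abc) log (C / nu(b)) <= C^2 nu(a) nu(c), using b log (C / b) <= C, and
   summing over a, b, c bounds it by C^2 times the square of the number of words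
   of length 2p. *)

From Stdlib Require Import Reals Lra Lia ZArith Arith List Classical FunctionalExtensionality.
Open Scope R_scope.

Lemma lsum_app {T : Type} (f : T -> R) l1 l2 : lsum f (l1 ++ l2) = lsum f l1 + lsum f l2.
Proof. unfold lsum. rewrite map_app, fold_right_app. induction (map f l1); simpl; lra. Qed.

Lemma lsum_ext_in {T : Type} (f g : T -> R) l : (forall x, In x l -> f x = g x) -> lsum f l = lsum g l.
Proof.
  induction l as [|a l IH]; intros H; [reflexivity|]. unfold lsum in *. simpl.
  rewrite H, IH; [reflexivity| |left; reflexivity].
  intros x Hx. apply H. right. exact Hx.
Qed.

Lemma lsum_le_in {T : Type} (f g : T -> R) l : (forall x, In x l -> f x <= g x) -> lsum f l <= lsum g l.
Proof.
  induction l as [|a l IH]; intros H; unfold lsum in *; simpl; [lra|].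
  assert (f a <= g a) by (apply H; simpl; auto).
  assert (fold_right Rplus 0 (map f l) <= fold_right Rplus 0 (map g l))
    by (apply IH; intros; apply H; simpl; auto).
  lra.
Qed.

Lemma lsum_scal {T : Type} (c : R) (f : T -> R) l : lsum (fun x => c * f x) l = c * lsum f l.
Proof. induction l as [|a l IH]; unfold lsum in *; simpl; [lra|]. rewrite IH. lra. Qed.

Lemma lsum_const {T : Type} (c : R) (l : list T) : lsum (fun _ => c) l = c * INR (length l).
Proof.
  induction l as [|a l IH]; unfold lsum in *; simpl; [lra|].
  rewrite IH. destruct (length l); simpl; lra.
Qed.

Lemma lsum_map {T U : Type} (f : U -> R) (g : T -> U) l : lsum f (map g l) = lsum (fun x => f (g x)) l.
Proof. unfold lsum. rewrite map_map. reflexivity. Qed.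

Lemma lsum_flat_map {T U : Type} (f : U -> R) (g : T -> list U) l :
  lsum f (flat_map g l) = lsum (fun a => lsum f (g a)) l.
Proof.
  induction l as [|a l IH]; [reflexivity|].
  simpl flat_map. rewrite lsum_app, IH. reflexivity.
Qed.

Lemma lsum_seq_add (f : nat -> R) s t m :
  lsum f (seq (s + t) m) = lsum (fun j => f (s + j)%nat) (seq t m).
Proof.
  revert t; induction m as [|m IH]; intros t; [reflexivity|].
  simpl seq. unfold lsum in *. simpl. rewrite <- Nat.add_succ_r, IH. reflexivity.
Qed.

Lemma lsum_NoDup_single_support {T : Type} (f : T -> R) l x0 :
  NoDup l -> (forall x, In x l -> f x <> 0 -> x = x0) ->
  lsum f l = 0 \/ lsum f l = f x0.
Proof.
  intros Hl Hsupp.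
  assert (Hzero : forall l', (forall x, In x l' -> f x <> 0 -> False) -> lsum f l' = 0).
  { intros l' H. rewrite (lsum_ext_in f (fun _ => 0)), lsum_const; [lra|].
    intros x Hx. destruct (Req_dec (f x) 0); [assumption|]. exfalso; eauto. }
  induction Hl as [|a l Ha Hl IH]; [left; reflexivity|].
  change (lsum f (a :: l)) with (f a + lsum f l).
  destruct (Req_dec (f a) 0) as [Hfa|Hfa].
  - rewrite Hfa, Rplus_0_l. apply IH. intros; apply Hsupp; simpl; auto.
  - pose proof (Hsupp a (or_introl eq_refl) Hfa) as ->.
    rewrite Hzero; [right; lra|].
    intros x Hx Hfx. apply Ha. rewrite <- (Hsupp x (or_intror Hx) Hfx). exact Hx.
Qed.

Lemma ln_le_sub1 (t : R) : 0 < t -> ln t <= t - 1.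
Proof. intros Ht. pose proof (exp_ineq1_le (ln t)). rewrite exp_ln in H by exact Ht. lra. Qed.

Lemma mul_ln_div_le (b C : R) : 0 < b -> 0 < C -> b * ln (C / b) <= C.
Proof.
  intros Hb HC.
  assert (Hl : ln (C / b) <= C / b - 1) by (apply ln_le_sub1; apply Rdiv_lt_0_compat; lra).
  apply Rle_trans with (b * (C / b - 1)); [apply Rmult_le_compat_l; lra|].
  replace (b * (C / b - 1)) with (C - b) by (field; lra). lra.
Qed.

Lemma mi_term_le (C x U V L b R : R) :
  0 < C -> 0 <= L -> 0 <= b -> 0 <= R -> 0 <= x ->
  x * b <= C * (U * V) -> x <= C * (L * b * R) ->
  mi_term x U V <= C * C * L * R.
Proof.
  intros HC HL Hb HR Hx Hxb HxLR.
  assert (Hbound : 0 <= C * C * L * R)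
    by (repeat apply Rmult_le_pos; lra).
  unfold mi_term. destruct (Req_EM_T x 0) as [_|Hx0]; [exact Hbound|].
  assert (Hxp : 0 < x) by lra.
  assert (Hbp : 0 < b).
  { destruct Hb as [Hb|Hb]; [exact Hb|]. subst b. exfalso. nra. }
  assert (HUV : 0 < U * V) by nra.
  assert (HU : U <> 0) by (intro; subst; lra).
  assert (HV : V <> 0) by (intro; subst; lra).
  assert (Hratio : x / (U * V) <= C / b).
  { apply Rmult_le_reg_r with (U * V * b); [apply Rmult_lt_0_compat; lra|].
    replace (x / (U * V) * (U * V * b)) with (x * b) by (field; auto).
    replace (C / b * (U * V * b)) with (C * (U * V)) by (field; lra). exact Hxb. }
  assert (Hln : ln (x / (U * V)) <= ln (C / b)).
  { destruct Hratio as [Hlt|Heq]; [|rewrite Heq; lra].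
    left. apply ln_increasing; [apply Rdiv_lt_0_compat|]; lra. }
  apply Rle_trans with (x * ln (C / b)); [apply Rmult_le_compat_l; lra|].
  destruct (Rle_dec (ln (C / b)) 0) as [Hneg|Hpos]; [nra|].
  apply Rle_trans with (C * (L * b * R) * ln (C / b)); [apply Rmult_le_compat_r; lra|].
  pose proof (mul_ln_div_le b C Hbp HC) as Hbln.
  replace (C * (L * b * R) * ln (C / b)) with (C * L * R * (b * ln (C / b))) by ring.
  replace (C * C * L * R) with (C * L * R * C) by ring.
  apply Rmult_le_compat_l; [repeat apply Rmult_le_pos|]; lra.
Qed.

Lemma words_length n k w : In w (words n k) -> length w = n.
Proof.
  revert w; induction n as [|n IH]; intros w Hw; simpl in Hw.
  - destruct Hw as [<-|[]]; reflexivity.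
  - apply in_flat_map in Hw as [a [_ Hw]]. apply in_map_iff in Hw as [x [<- Hx]].
    simpl. f_equal. auto.
Qed.

Lemma words_NoDup n k : NoDup (words n k).
Proof.
  induction n as [|n IH]; simpl; [repeat constructor; intros []|].
  generalize (seq_NoDup k 0). generalize (seq 0 k) as letters.
  induction 1 as [|a l Ha Hl IHl]; simpl; [constructor|].
  apply NoDup_app; [|exact IHl|].
  - apply NoDup_map_NoDup_ForallPairs; [|exact IH].
    intros x y _ _ E. injection E. auto.
  - intros w Hw Hw'. apply in_map_iff in Hw as [x [<- _]].
    apply in_flat_map in Hw' as [b [Hb Hw']]. apply in_map_iff in Hw' as [y [E _]].
    injection E as -> _. contradiction.
Qed.

Lemma words_app_sum (f : list nat -> R) n m k :
  lsum f (words (n + m) k) = lsum (fun x => lsum (fun y => f (x ++ y)) (words m k)) (words n k).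
Proof.
  revert f. induction n as [|n IH]; intros f; simpl.
  - change (lsum f (words m k) = lsum (fun y => f y) (words m k) + 0).
    rewrite Rplus_0_r. reflexivity.
  - rewrite !lsum_flat_map. apply lsum_ext_in; intros a _.
    rewrite !lsum_map, IH. reflexivity.
Qed.

Lemma words_mass k mu n : inv_prob k mu -> lsum mu (words n k) = 1.
Proof.
  intros Hmu. induction n as [|n IH].
  - unfold lsum. simpl. rewrite (ip_one _ _ Hmu). lra.
  - rewrite <- IH, <- Nat.add_1_r, words_app_sum. apply lsum_ext_in; intros x _.
    rewrite (ip_right _ _ Hmu x). simpl words. rewrite lsum_flat_map.
    apply lsum_ext_in; intros a _. unfold lsum. simpl. lra.
Qed.

Lemma lsum_firstn_words k mu n m : inv_prob k mu ->
  lsum (fun v => mu (firstn n v)) (words (n + m) k) = INR (length (words m k)).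
Proof.
  intros Hmu. rewrite words_app_sum.
  rewrite (lsum_ext_in _ (fun x => INR (length (words m k)) * mu x)).
  - rewrite lsum_scal, (words_mass k mu n Hmu). ring.
  - intros x Hx. apply words_length in Hx.
    rewrite (lsum_ext_in _ (fun _ => mu x)), lsum_const; [ring|].
    intros y _. rewrite firstn_app, firstn_all2, Hx, Nat.sub_diag, app_nil_r by lia.
    reflexivity.
Qed.

Lemma lsum_skipn_words k mu n m : inv_prob k mu ->
  lsum (fun u => mu (skipn m u)) (words (n + m) k) = INR (length (words m k)).
Proof.
  intros Hmu. rewrite Nat.add_comm, words_app_sum.
  rewrite (lsum_ext_in _ (fun _ => 1)), lsum_const; [ring|].
  intros x Hx. apply words_length in Hx. rewrite <- (words_mass k mu n Hmu).
  apply lsum_ext_in; intros y _.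
  rewrite skipn_app, skipn_all2, Hx, Nat.sub_diag by lia. reflexivity.
Qed.

Lemma shiftn_shiftn j n y : shiftn j (shiftn n y) = shiftn (n + j) y.
Proof. apply functional_extensionality; intro x. unfold shiftn. f_equal. lia. Qed.

Lemma SFT_shiftn k forb y j : SFT k forb y -> SFT k forb (shiftn j y).
Proof.
  intros [Hk Hforb]. split; [intros n; apply Hk|].
  intros n w Hw Hm. apply (Hforb (n + Z.of_nat j)%Z w Hw). intros i Hi.
  rewrite <- (Hm i Hi). unfold shiftn. f_equal. lia.
Qed.

Lemma matches_app_l y a b : matches y 0 (a ++ b) -> matches y 0 a.
Proof.
  intros Hm i Hi. rewrite (Hm i) by (rewrite length_app; lia).
  apply app_nth1. exact Hi.
Qed.

Lemma matches_app_r y a b : matches y 0 (a ++ b) -> matches (shiftn (length a) y) 0 b.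
Proof.
  intros Hm i Hi. unfold shiftn.
  rewrite <- (app_nth2_plus a b), <- (Hm (length a + i)%nat) by (rewrite length_app; lia).
  f_equal. lia.
Qed.

Lemma init_word_matches y w : matches y 0 w -> init_word y (length w) = w.
Proof.
  intros Hm. apply nth_ext with (d := 0%nat) (d' := 0%nat).
  - unfold init_word. rewrite length_map, length_seq. reflexivity.
  - intros i Hi. unfold init_word in *. rewrite length_map, length_seq in Hi.
    rewrite nth_indep with (d' := y (Z.of_nat 0)) by (rewrite length_map, length_seq; lia).
    rewrite (map_nth (fun j => y (Z.of_nat j))), seq_nth by lia.
    rewrite <- (Hm i Hi). reflexivity.
Qed.

Lemma birkhoff_add phi n m y :
  birkhoff phi (n + m) y = birkhoff phi n y + birkhoff phi m (shiftn n y).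
Proof.
  unfold birkhoff. rewrite seq_app, lsum_app, <- (Nat.add_0_r (0 + n)), Nat.add_0_l,
    lsum_seq_add.
  f_equal. apply lsum_ext_in; intros j _. rewrite shiftn_shiftn. reflexivity.
Qed.

Definition gibbs_weight (P : R) (phi : config -> R) (n : nat) (y : config) : R :=
  exp (- INR n * P + birkhoff phi n y).

Lemma gibbs_weight_add P phi n m y :
  gibbs_weight P phi (n + m) y = gibbs_weight P phi n y * gibbs_weight P phi m (shiftn n y).
Proof. unfold gibbs_weight. rewrite <- exp_plus, plus_INR, birkhoff_add. f_equal. ring. Qed.

(* The Gibbs inequalities also hold for [n = 0] once the constant is at least [1]. *)
Lemma Gibbs_for_bounds k Y phi mu : inv_prob k mu -> Gibbs_for Y phi mu ->
  exists P C, 1 <= C /\ forall y n, Y y ->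
    gibbs_weight P phi n y <= C * mu (init_word y n) /\
    mu (init_word y n) <= C * gibbs_weight P phi n y.
Proof.
  intros Hmu [P [K [HK HG]]]. exists P, (Rmax K 1). split; [apply Rmax_r|].
  intros y n Hy.
  pose proof (Rmax_l K 1). pose proof (Rmax_r K 1).
  assert (Hw : 0 < gibbs_weight P phi n y) by apply exp_pos.
  destruct n as [|n].
  - unfold gibbs_weight, birkhoff, init_word, lsum. simpl. rewrite (ip_one _ _ Hmu).
    replace (- 0 * P + 0) with 0 by ring. rewrite exp_0. lra.
  - destruct (HG y (S n) Hy) as [Hlo Hhi]; [lia|]. fold (gibbs_weight P phi (S n) y) in Hlo, Hhi.
    pose proof (ip_nonneg _ _ Hmu (init_word y (S n))).
    split.
    + apply Rle_trans with (K * mu (init_word y (S n))); [|apply Rmult_le_compat_r; lra].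
      apply Rmult_le_reg_l with (/ K); [apply Rinv_0_lt_compat; lra|].
      rewrite <- Rmult_assoc, Rinv_l, Rmult_1_l by lra. exact Hlo.
    + apply Rle_trans with (K * gibbs_weight P phi (S n) y); [exact Hhi|].
      apply Rmult_le_compat_r; lra.
Qed.

Lemma quasi_Bernoulli_arith (C ea eb ec xa xb xc xab xbc xabc : R) :
  0 < C -> 0 < ea -> 0 < eb -> 0 < ec -> 0 <= xb -> 0 <= xabc ->
  xabc <= C * (ea * eb * ec) -> xb <= C * eb ->
  ea <= C * xa -> eb <= C * xb -> ec <= C * xc ->
  ea * eb <= C * xab -> eb * ec <= C * xbc ->
  xabc * xb <= C ^ 4 * (xbc * xab) /\ xabc <= C ^ 4 * (xa * xb * xc).
Proof.
  intros HC Ha Hb Hc Hxb Hxabc Habc Hb' Ha1 Hb1 Hc1 Hab Hbc. split.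
  - apply Rle_trans with (C * (ea * eb * ec) * (C * eb)); [apply Rmult_le_compat; lra|].
    replace (C * (ea * eb * ec) * (C * eb)) with (C * C * ((ea * eb) * (eb * ec))) by ring.
    replace (C ^ 4 * (xbc * xab)) with (C * C * ((C * xab) * (C * xbc))) by ring.
    apply Rmult_le_compat_l; [nra|].
    apply Rmult_le_compat; [nra|nra|lra|lra].
  - apply Rle_trans with (C * (ea * eb * ec)); [exact Habc|].
    replace (C ^ 4 * (xa * xb * xc)) with (C * ((C * xa) * (C * xb) * (C * xc))) by ring.
    apply Rmult_le_compat_l; [lra|].
    apply Rmult_le_compat; [nra|lra| |lra].
    apply Rmult_le_compat; lra.
Qed.

Definition quasi_Bernoulli (mu : list nat -> R) (C : R) : Prop :=
  forall a b c,
    mu (a ++ b ++ c) * mu b <= C * (mu (b ++ c) * mu (a ++ b)) /\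
    mu (a ++ b ++ c) <= C * (mu a * mu b * mu c).

Lemma Gibbs_measure_quasi_Bernoulli k (Y : config -> Prop) mu :
  (forall y j, Y y -> Y (shiftn j y)) -> Gibbs_measure k Y mu ->
  exists C, 0 < C /\ quasi_Bernoulli mu C.
Proof.
  intros HY [Hmu [Hsupp [phi [_ HG]]]].
  destruct (Gibbs_for_bounds k Y phi mu Hmu HG) as [P [C [HC Hbd]]].
  exists (C ^ 4). split; [apply pow_lt; lra|]. intros a b c.
  pose proof (ip_nonneg _ _ Hmu) as Hnn.
  destruct (Req_dec (mu (a ++ b ++ c)) 0) as [Hz|Hnz].
  { rewrite Hz, Rmult_0_l. pose proof (pow_lt C 4 ltac:(lra)).
    pose proof (Hnn a). pose proof (Hnn b). pose proof (Hnn c).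
    pose proof (Hnn (a ++ b)). pose proof (Hnn (b ++ c)).
    split; repeat apply Rmult_le_pos; lra. }
  assert (Hy : exists y, Y y /\ matches y 0 (a ++ b ++ c))
    by (apply NNPP; intros Hn; exact (Hnz (Hsupp _ Hn))).
  destruct Hy as [y [Hy Habc]].
  set (yb := shiftn (length a) y). set (yc := shiftn (length b) yb).
  assert (Hbc : matches yb 0 (b ++ c)) by exact (matches_app_r _ _ _ Habc).
  assert (Hc : matches yc 0 c) by exact (matches_app_r _ _ _ Hbc).
  assert (Hab : matches y 0 (a ++ b)) by (rewrite app_assoc in Habc; exact (matches_app_l _ _ _ Habc)).
  assert (Ha : matches y 0 a) by exact (matches_app_l _ _ _ Hab).
  assert (Hb : matches yb 0 b) by exact (matches_app_l _ _ _ Hbc).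
  assert (Hyb : Y yb) by (apply HY; exact Hy).
  assert (Hyc : Y yc) by (apply HY; exact Hyb).
  set (E := gibbs_weight P phi).
  assert (Eab : E (length (a ++ b)) y = E (length a) y * E (length b) yb)
    by (unfold E; rewrite length_app; apply gibbs_weight_add).
  assert (Ebc : E (length (b ++ c)) yb = E (length b) yb * E (length c) yc)
    by (unfold E; rewrite length_app; apply gibbs_weight_add).
  assert (Eabc : E (length (a ++ b ++ c)) y = E (length a) y * E (length b) yb * E (length c) yc)
    by (unfold E in *; rewrite length_app, gibbs_weight_add; fold yb; rewrite Ebc; ring).
  assert (B : forall z w, Y z -> matches z 0 w -> E (length w) z <= C * mu w /\ mu w <= C * E (length w) z).
  { intros z w Hz Hm. rewrite <- (init_word_matches z w Hm) at 2 3. exact (Hbd z _ Hz). }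
  destruct (B y _ Hy Habc) as [_ Babc]. destruct (B y _ Hy Hab) as [Bab _].
  destruct (B yb _ Hyb Hbc) as [Bbc _]. destruct (B y _ Hy Ha) as [Ba _].
  destruct (B yb _ Hyb Hb) as [Bb Bb']. destruct (B yc _ Hyc Hc) as [Bc _].
  rewrite Eabc in Babc. rewrite Eab in Bab. rewrite Ebc in Bbc.
  apply (quasi_Bernoulli_arith C (E (length a) y) (E (length b) yb) (E (length c) yc));
    try apply exp_pos; auto; lra.
Qed.

Lemma word_atb_true w off u : word_atb w off u = true -> (off + length u <= length w)%nat ->
  firstn (length u) (skipn off w) = u.
Proof.
  intros H Hl. unfold word_atb in H. rewrite forallb_forall in H.
  apply nth_ext with (d := 0%nat) (d' := 0%nat).
  - rewrite length_firstn, length_skipn. lia.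
  - intros i Hi. rewrite length_firstn, length_skipn in Hi.
    rewrite nth_firstn, nth_skipn. destruct (Nat.ltb_spec i (length u)); [|lia].
    apply Nat.eqb_eq, H, in_seq. lia.
Qed.

Lemma joint_overlap_cases k mu (z : Z) n m u v :
  length u = (n + m)%nat -> length v = (n + m)%nat ->
  joint k mu (z + Z.of_nat n) u z v = 0 \/
  exists a b d, length a = n /\ v = a ++ b /\ u = b ++ d /\
    joint k mu (z + Z.of_nat n) u z v = mu (a ++ b ++ d).
Proof.
  intros Hu Hv. unfold joint. cbv zeta. rewrite Hu, Hv.
  replace (Z.min (z + Z.of_nat n) z) with z by lia.
  replace (Z.to_nat (Z.max (z + Z.of_nat n + Z.of_nat (n + m)) (z + Z.of_nat (n + m)) - z))
    with (n + (n + m))%nat by lia.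
  replace (Z.to_nat (z + Z.of_nat n - z)) with n by lia.
  replace (Z.to_nat (z - z)) with 0%nat by lia.
  set (f := fun w => if andb (word_atb w n u) (word_atb w 0 v) then mu w else 0).
  assert (Hf : forall w, In w (words (n + (n + m)) k) -> f w <> 0 -> w = firstn n v ++ u).
  { intros w Hw Hfw. apply words_length in Hw. unfold f in Hfw.
    destruct (word_atb w n u) eqn:Eu, (word_atb w 0 v) eqn:Ev; try (simpl in Hfw; lra).
    apply word_atb_true in Eu; [|lia]. apply word_atb_true in Ev; [|lia].
    rewrite Hu, firstn_all2 in Eu by (rewrite length_skipn; lia).
    rewrite Hv in Ev. simpl skipn in Ev.
    rewrite <- Ev, firstn_firstn, Nat.min_l, <- Eu by lia. symmetry. apply firstn_skipn. }
  destruct (lsum_NoDup_single_support f _ _ (words_NoDup _ k) Hf) as [H0|H1]; [left; exact H0|].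
  rewrite H1. unfold f.
  destruct (word_atb (firstn n v ++ u) n u), (word_atb (firstn n v ++ u) 0 v) eqn:Ev;
    simpl; try (left; reflexivity).
  right. exists (firstn n v), (firstn m u), (skipn m u).
  apply word_atb_true in Ev; [|rewrite length_app, length_firstn; lia].
  simpl skipn in Ev. rewrite Hv, firstn_app, firstn_firstn, length_firstn, Hv in Ev.
  replace (Init.Nat.min (n + m) n) with n in Ev by lia.
  replace (n + m - Init.Nat.min n (n + m))%nat with m in Ev by lia.
  rewrite firstn_skipn, length_firstn. repeat split; [lia|symmetry; exact Ev].
Qed.

Lemma mi_term_overlap_le k mu C (z : Z) n m u v :
  inv_prob k mu -> 0 < C -> quasi_Bernoulli mu C ->
  length u = (n + m)%nat -> length v = (n + m)%nat ->
  mi_term (joint k mu (z + Z.of_nat n) u z v) (mu u) (mu v)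
  <= C * C * mu (firstn n v) * mu (skipn m u).
Proof.
  intros Hmu HC HQB Hu Hv. pose proof (ip_nonneg _ _ Hmu) as Hnn.
  destruct (joint_overlap_cases k mu z n m u v Hu Hv) as [H0|[a [b [d [Ha [-> [-> Hj]]]]]]].
  - rewrite H0. unfold mi_term. destruct (Req_EM_T 0 0) as [_|]; [|lra].
    pose proof (Hnn (firstn n v)). pose proof (Hnn (skipn m u)).
    repeat apply Rmult_le_pos; lra.
  - rewrite length_app in Hv.
    rewrite Hj, firstn_app, firstn_all2, Ha, Nat.sub_diag, app_nil_r by lia.
    assert (Hb : length b = m) by lia.
    rewrite skipn_app, skipn_all2, Hb, Nat.sub_diag by lia.
    destruct (HQB a b d). apply mi_term_le with (mu b); auto; lra.
Qed.

Theorem mainTheorem13 :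
  forall (k : nat) (forb : list (list nat)) (mu : list nat -> R),
    top_mixing (SFT k forb) ->
    Gibbs_measure k (SFT k forb) mu ->
    forall p : nat,
      exists M : R, forall N : nat, (1 <= N)%nat ->
        mutual_info k mu (- Z.of_nat p)%Z (N + 2 * p)
                         (- Z.of_nat N - Z.of_nat p)%Z (N + 2 * p) <= M.
Proof.
  intros k forb mu _ HG p.
  destruct (Gibbs_measure_quasi_Bernoulli k _ mu (SFT_shiftn k forb) HG) as [C [HC HQB]].
  pose proof (proj1 HG) as Hmu.
  set (L := INR (length (words (2 * p) k))).
  exists (C * C * L * L). intros N _. unfold mutual_info.
  replace (- Z.of_nat p)%Z with (- Z.of_nat N - Z.of_nat p + Z.of_nat N)%Z by lia.
  apply Rle_trans with (lsum (fun u => C * C * mu (skipn (2 * p) u) *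
    lsum (fun v => mu (firstn N v)) (words (N + 2 * p) k)) (words (N + 2 * p) k)).
  - apply lsum_le_in; intros u Hu. rewrite <- lsum_scal. apply lsum_le_in; intros v Hv.
    apply Rle_trans with (C * C * mu (firstn N v) * mu (skipn (2 * p) u)); [|right; ring].
    apply mi_term_overlap_le; try eapply words_length; eassumption.
  - rewrite lsum_firstn_words by exact Hmu. fold L.
    rewrite (lsum_ext_in _ (fun u => C * C * L * mu (skipn (2 * p) u))) by (intros; ring).
    rewrite lsum_scal, lsum_skipn_words by exact Hmu. fold L. right. ring.
Qed.
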